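(* Let $M$ be a 3-dimensional contact Sub-Riemannian manifold, $W$ a $C^2$ $\Delta$-minimal surface and $\hat q\in W$ a characteristic point. Choose local coordinates $(x,y,z)$ near $\hat q=0$ with $W=\{z=0\}$, $X_1(\hat q)=\partial_x$, $X_2(\hat q)=\partial_y$, and write $a_i=dz(X_i)$, $i=1,2$ (so $a_i(0)=0$). Let $$A=\begin{pmatrix}\partial_xa_1&\partial_ya_1\\ \partial_xa_2&\partial_ya_2\end{pmatrix}(0)=\begin{pmatrix}a&b\\ c&d\end{pmatrix}.$$ If $\hat q$ is an isolated characteristic point and $\det A\ne0$, then $a=d=0$, $b=-c$, and $\det A=c^2>0$; that is, $\hat q$ is a zero of index $+1$ of the map $W\ni q\mapsto(X_1F(q),X_2F(q))$, $F=z$. In particular the structure functions $c_{12}^1,c_{12}^2$ do not affect the index.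
   Context: $M$: smooth 3-manifold with a contact rank-2 distribution $\Delta$ with orthonormal frame $X_1,X_2$; canonical 1-form $\omega$ with $\omega(\Delta)=0$, $d\omega(X_1,X_2)=1$; Reeb field $X_3$ ($\omega(X_3)=1$, $d\omega(V,X_3)=0$ for $V\in\Delta$); structure functions $[X_i,X_j]=-\sum_kc_{ij}^kX_k$. For $W=\{F=0\}$ ($F\in C^2$, $dF\ne0$), a characteristic point is a point where $X_1F=X_2F=0$. $W$ is $\Delta$-minimal if at all points of $W$ with $D_1=\sqrt{(X_1F)^2+(X_2F)^2}\neq0$: $\big(X_1^2F(X_2F)^2+X_2^2F(X_1F)^2-X_1FX_2F(X_1X_2+X_2X_1)F\big)D_1^{-3}+(c_{12}^2X_1F-c_{12}^1X_2F)D_1^{-1}=0$ (a property of $W$, independent of the defining function). *)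

(* Local coordinates: points of a chart
   of M are row vectors p : 'rV[R]_3 ; vector fields are maps 'rV_3 -> 'rV_3;
   1-forms are maps 'rV_3 -> 'rV_3 (components of the covector). *)
From HB Require Import structures.
From mathcomp Require Import all_boot all_order all_algebra.
From mathcomp Require Import all_classical all_reals all_analysis.
Set Implicit Arguments. Unset Strict Implicit. Unset Printing Implicit Defensive.
Import Order.TTheory GRing.Theory Num.Theory.
Import numFieldNormedType.Exports.
Local Open Scope classical_set_scope.
Local Open Scope ring_scope.

Section Defs.
Variable R : realType.
Notation V := 'rV[R]_3.

Fixpoint CkOn {W : normedModType R} (n : nat) (U : set V) (f : V -> W) : Prop :=
  match n with
  | O => forall p, U p -> {for p, continuous f}
  | S n' => (forall p, U p -> differentiable f p) /\
            forall v : V, CkOn n' U (fun p => derive f p v)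
  end.

Definition SmoothOn {W : normedModType R} (U : set V) (f : V -> W) : Prop :=
  forall n, CkOn n U f.

Definition vact (X : V -> V) (f : V -> R) : V -> R :=
  fun p => derive f p (X p).

Definition lie (X Y : V -> V) : V -> V :=
  fun p => derive Y p (X p) - derive X p (Y p).

Definition pair (w v : V) : R := \sum_(i < 3) w 0 i * v 0 i.

Definition dform (om : V -> V) (p : V) (v w : V) : R :=
  pair (derive om p v) w - pair (derive om p w) v.

End Defs.

(* Write G1 := X1 F and G2 := X2 F; both vanish at the characteristic point q0,
   and their derivatives along X1, X2 at q0 form the matrix A.  For a horizontal
   vector v (tangent to W at q0, since q0 is characteristic) an intermediate value
   argument yields points q_k = q0 + s_k w_k of W with s_k -> 0+ and w_k -> v.
   Multiplying the Delta-minimal equation at q_k by D1^3 / s_k^2 and letting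
   k -> oo kills the cubic term c12^2 X1 F - c12^1 X2 F (the structure functions
   are continuous, being the coordinates of [X1, X2] on a continuous frame), and
   leaves  a y^2 + d x^2 - x y (b + c) = 0  at (x, y) = (dG1 v, dG2 v).  Since
   det A <> 0, these values exhaust R^2 as v runs over horizontal vectors, so the
   quadratic form vanishes identically: a = d = 0 and b = -c. *)

From HB Require Import structures.
From mathcomp Require Import all_boot all_order all_algebra.
From mathcomp Require Import all_classical all_reals all_analysis.
From mathcomp Require Import lra ring.

Set Implicit Arguments.
Unset Strict Implicit.
Unset Printing Implicit Defensive.
Import Order.TTheory GRing.Theory Num.Theory.
Import numFieldNormedType.Exports.
Local Open Scope classical_set_scope.
Local Open Scope ring_scope.

Section MeanCurvatureForm.
Variable R : realFieldType.

(* The quadratic form of [[a, b], [c, d]] at the rotated vector (y, -x). *)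
Definition quad_perp (a b c d x y : R) : R := a * y ^+ 2 + d * x ^+ 2 - x * y * (c + b).

(* D1^3 times the left-hand side of the Delta-minimality equation, where
   (x, y) = (X1 F, X2 F), a, b, c, d are the second derivatives X_j X_i F and
   k1, k2 are c12^1, c12^2. *)
Definition mean_curv_num (a b c d k1 k2 x y : R) : R :=
  quad_perp a b c d x y + (k2 * x - k1 * y) * (x ^+ 2 + y ^+ 2).

Lemma mean_curv_numZ (a b c d k1 k2 s x y : R) :
  mean_curv_num a b c d k1 k2 (s * x) (s * y) =
  s ^+ 2 * (quad_perp a b c d x y + s * ((k2 * x - k1 * y) * (x ^+ 2 + y ^+ 2))).
Proof. by rewrite /mean_curv_num /quad_perp; ring. Qed.

Lemma quad_perp_eq0 (a b c d : R) :
  (forall x y, quad_perp a b c d x y = 0) -> [/\ a = 0, d = 0 & b = - c].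
Proof.
move=> Q; have := Q 1 0; have := Q 0 1; have := Q 1 1.
rewrite /quad_perp !expr2 !(mul0r, mulr0, mul1r, mulr1) => ? ? ?; split; lra.
Qed.
End MeanCurvatureForm.

Lemma mean_curv_num_eq0 (R : rcfType) (a b c d k1 k2 x y : R) :
  x ^+ 2 + y ^+ 2 != 0 ->
  quad_perp a b c d x y / Num.sqrt (x ^+ 2 + y ^+ 2) ^+ 3
    + (k2 * x - k1 * y) / Num.sqrt (x ^+ 2 + y ^+ 2) = 0 ->
  mean_curv_num a b c d k1 k2 x y = 0.
Proof.
move=> nz; set D := Num.sqrt _ => H.
have D0 : D != 0 by rewrite sqrtr_eq0 -ltNge lt_def nz addr_ge0 ?sqr_ge0.
have SD : x ^+ 2 + y ^+ 2 = D ^+ 2 by rewrite sqr_sqrtr // addr_ge0 ?sqr_ge0.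
by rewrite /mean_curv_num SD -(mul0r (D ^+ 3)) -H; field.
Qed.

Lemma cramer2 (R : fieldType) (a b c d u1 u2 : R) : a * d - b * c != 0 ->
  exists al be, al * a + be * b = u1 /\ al * c + be * d = u2.
Proof.
move=> det; exists ((d * u1 - b * u2) / (a * d - b * c)), ((a * u2 - c * u1) / (a * d - b * c)).
by split; field.
Qed.

Lemma quad_perp_eq0_det (R : realFieldType) (a b c d : R) :
  (forall x y, quad_perp a b c d x y = 0) -> a * d - b * c != 0 ->
  [/\ a = 0, d = 0, b = - c, a * d - b * c = c ^+ 2 & 0 < a * d - b * c].
Proof.
move=> /quad_perp_eq0 [a0 d0 bc] det.
have E : a * d - b * c = c ^+ 2 by rewrite a0 d0 bc; ring.
by split; rewrite // E lt_def sqr_ge0 andbT -E.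
Qed.

Section Limit.
Variables (R : realType) (T : topologicalType).

Lemma quad_perp_limit (q0 : T) (P : T^nat) (S : R^nat) (G1 G2 a b c d k1 k2 : T -> R)
    (u1 u2 : R) :
  (forall k, S k != 0) -> S @ \oo --> 0 -> P @ \oo --> q0 ->
  (fun k => G1 (P k) / S k) @ \oo --> u1 -> (fun k => G2 (P k) / S k) @ \oo --> u2 ->
  {for q0, continuous a} -> {for q0, continuous b} -> {for q0, continuous c} ->
  {for q0, continuous d} -> {for q0, continuous k1} -> {for q0, continuous k2} ->
  (\forall k \near \oo, G1 (P k) ^+ 2 + G2 (P k) ^+ 2 != 0 ->
     mean_curv_num (a (P k)) (b (P k)) (c (P k)) (d (P k)) (k1 (P k)) (k2 (P k))
       (G1 (P k)) (G2 (P k)) = 0) ->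
  u1 ^+ 2 + u2 ^+ 2 != 0 -> quad_perp (a q0) (b q0) (c q0) (d q0) u1 u2 = 0.
Proof.
move=> S0 Sto0 Pq0 xu yu ca cb cc cd ck1 ck2 mc_eq u0.
set x := fun k => G1 (P k) / S k; set y := fun k => G2 (P k) / S k.
have atP (h : T -> R) : {for q0, continuous h} -> (fun k => h (P k)) @ \oo --> h q0.
  by move=> hc; exact: cvg_comp Pq0 hc.
have cvg_sqr (f : R^nat) (l : R) : f @ \oo --> l -> (fun k => f k ^+ 2) @ \oo --> l ^+ 2.
  by move=> fl; rewrite expr2; under eq_fun do rewrite expr2; exact: cvgM.
have nrm : (fun k => x k ^+ 2 + y k ^+ 2) @ \oo --> u1 ^+ 2 + u2 ^+ 2.
  by apply: cvgD; exact: cvg_sqr.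
(* [mean_curv_num] at (S k * x k, S k * y k) is S k ^+ 2 * Phi k *)
set Phi := fun k => quad_perp (a (P k)) (b (P k)) (c (P k)) (d (P k)) (x k) (y k)
  + S k * ((k2 (P k) * x k - k1 (P k) * y k) * (x k ^+ 2 + y k ^+ 2)).
have PhiL : Phi @ \oo --> quad_perp (a q0) (b q0) (c q0) (d q0) u1 u2
    + 0 * ((k2 q0 * u1 - k1 q0 * u2) * (u1 ^+ 2 + u2 ^+ 2)).
  rewrite /Phi /quad_perp; apply: cvgD; first apply: cvgB; first apply: cvgD.
  - exact: cvgM (atP _ ca) (cvg_sqr _ _ yu).
  - exact: cvgM (atP _ cd) (cvg_sqr _ _ xu).
  - exact: cvgM (cvgM xu yu) (cvgD (atP _ cc) (atP _ cb)).
  - exact: cvgM Sto0 (cvgM (cvgB (cvgM (atP _ ck2) xu) (cvgM (atP _ ck1) yu)) nrm).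
have Phi0 : \forall k \near \oo, Phi k = 0.
  have nz : \forall k \near \oo, x k ^+ 2 + y k ^+ 2 != 0.
    exact: cvgr_neq0 _ nrm u0.
  near=> k.
  have Gx : G1 (P k) = S k * x k by rewrite /x mulrC divfK.
  have Gy : G2 (P k) = S k * y k by rewrite /y mulrC divfK.
  have nzk : x k ^+ 2 + y k ^+ 2 != 0 by near: k.
  have : G1 (P k) ^+ 2 + G2 (P k) ^+ 2 != 0 ->
      mean_curv_num (a (P k)) (b (P k)) (c (P k)) (d (P k)) (k1 (P k)) (k2 (P k))
        (G1 (P k)) (G2 (P k)) = 0 by near: k.
  rewrite Gx Gy mean_curv_numZ -/(Phi k) => H.
  have /H/eqP : (S k * x k) ^+ 2 + (S k * y k) ^+ 2 != 0.
    rewrite (_ : _ + _ = S k ^+ 2 * (x k ^+ 2 + y k ^+ 2)); last by ring.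
    by rewrite mulf_neq0 ?expf_neq0.
  by rewrite mulf_eq0 expf_eq0 (negbTE (S0 k)) /= => /eqP.
rewrite mul0r addr0 in PhiL.
exact: norm_cvg_unique PhiL (cvg_near_cst _ Phi0).
Unshelve. all: by end_near. Qed.
End Limit.

Section FirstOrder.
Variables (R : realType) (E : normedModType R).
Implicit Types (f F : E -> R) (v n w x : E) (s r eps eta : R).

Lemma near_eq_differentiable (W : normedModType R) (f g : E -> W) x :
  (\forall y \near x, f y = g y) -> differentiable f x -> differentiable g x.
Proof.
move=> fg df; have c0 : continuous (\0 : E -> W) := @cst_continuous _ _ (0 : W).
have dk : (g - f) \o shift x = cst ((g - f) x) + \0 +o_0 id.
  rewrite !fctE -(nbhs_singleton fg) subrr; apply/eqaddoP => e e0.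
  move: fg; rewrite (near_shift 0) subr0; apply: filterS => h /= fgh.
  by rewrite !fctE fgh subrr addr0 subrr normr0 mulr_ge0 // ltW.
have dk' : differentiable (g - f) x by apply/diff_locallyP; rewrite (diff_unique c0 dk).
by have := differentiableD df dk'; rewrite addrC subrK.
Qed.

Lemma differentiable_remainder f x eps : differentiable f x -> 0 < eps ->
  \forall h \near 0, `|f (h + x) - f x - 'd f x h| <= eps * `|h|.
Proof.
move=> /diff_locally dfx eps0.
have := congr1 (fun g => g - (cst (f x) + 'd f x)) dfx.
rewrite [X in _ = X -> _]addrC addKr => Hk.
set k := (X in _ = X) in Hk.
have := littleoP [littleo of k] eps0.
apply: filterS => h; move/(congr1 (fun g => g h)): Hk => /= <-.
by rewrite opprD addrA.
Qed.

Lemma norm_segment v n s r eps : `|r| <= eps ->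
  `|s *: (v + r *: n)| <= `|s| * (`|v| + eps * `|n|).
Proof.
move=> re; rewrite normrZ ler_wpM2l // (le_trans (ler_normD _ _)) //.
by rewrite lerD2l normrZ ler_wpM2r.
Qed.

Lemma near0_segment (P : E -> Prop) v n eps : 0 <= eps ->
  (\forall h \near 0, P h) ->
  \forall s \near (0 : R), forall r, `|r| <= eps -> P (s *: (v + r *: n)).
Proof.
move=> eps0 /nbhs_norm0P [rho rho0 Prho].
have B0 : 0 < `|v| + eps * `|n| + 1 by rewrite ltr_pwDr // addr_ge0 ?mulr_ge0.
apply/nbhs_norm0P; exists (rho / (`|v| + eps * `|n| + 1)) => [|s /= hs r re].
  exact: divr_gt0.
apply: Prho; rewrite /= (le_lt_trans (norm_segment _ _ s re)) //.
have B1 : `|v| + eps * `|n| <= `|v| + eps * `|n| + 1 by rewrite lerDl.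
by rewrite (le_lt_trans (ler_wpM2l _ B1)) // -ltr_pdivlMr.
Qed.

Lemma segment_linearization F q0 v n eps eta :
  differentiable F q0 -> 0 <= eps -> 0 < eta ->
  \forall s \near (0 : R), forall r, `|r| <= eps ->
    `|F (s *: (v + r *: n) + q0) - F q0 - s * 'd F q0 (v + r *: n)| <= `|s| * eta.
Proof.
move=> dF eps0 eta0; set B := `|v| + eps * `|n|.
have B0 : 0 < B + 1 by rewrite ltr_pwDr // addr_ge0 ?mulr_ge0.
have eta'0 : 0 < eta / (B + 1) by exact: divr_gt0.
have rem := near0_segment v n eps0 (differentiable_remainder dF eta'0).
apply: filterS rem => s Hs r re; move: (Hs r re).
rewrite linearZ /= => /le_trans; apply.
apply: le_trans (ler_wpM2l (ltW eta'0) (norm_segment _ _ s re)) _.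
by rewrite mulrCA ler_wpM2l // mulrAC ler_pdivrMr // ler_wpM2l ?ltW // ltrDl.
Qed.

Lemma same_sign (x y : R) : `|x - y| < `|y| -> 0 < x * y.
Proof.
rewrite ltr_norml; have [y0|y0] := leP y 0.
  by rewrite ler0_norm // => /andP[h1 h2]; rewrite -mulrNN mulr_gt0 //; lra.
by rewrite gtr0_norm // => /andP[h1 h2]; rewrite mulr_gt0 //; lra.
Qed.

Lemma IVT_sign (f : R -> R) (a b : R) : a <= b -> {within `[a, b], continuous f} ->
  f a * f b < 0 -> exists2 c, c \in `[a, b] & f c = 0.
Proof.
move=> ab fc fab; apply: IVT => //.
have [fa0|fa0] := leP (f a) 0.
  have fb0 : 0 <= f b by rewrite leNgt; apply/negP => fb0; nra.
  by rewrite ge_min fa0 le_max fb0 orbT.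
have fb0 : f b <= 0 by rewrite leNgt; apply/negP => fb0; nra.
by rewrite ge_min fb0 orbT le_max ltW.
Qed.

Lemma zeros_along_direction F q0 v n eps :
  differentiable F q0 -> F q0 = 0 -> 'd F q0 v = 0 -> 'd F q0 n != 0 ->
  (\forall q \near q0, {for q, continuous F}) -> 0 < eps ->
  \forall s \near 0^'+, exists2 r, `|r| <= eps & F (s *: (v + r *: n) + q0) = 0.
Proof.
move=> dF F0 dFv dFn Fc eps0; set c := 'd F q0 n.
have c0 : 0 < `|c| by rewrite normr_gt0.
have dseg r : 'd F q0 (v + r *: n) = r * c by rewrite linearD linearZ dFv add0r.
have Fc0 : \forall h \near 0, {for h + q0, continuous F}.
  by move: Fc; rewrite (near_shift 0) subr0.
have cont := near0_segment v n (ltW eps0) Fc0.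
have eta0 : 0 < eps * `|c| / 2 by rewrite divr_gt0 ?mulr_gt0.
have lin := segment_linearization v n dF (ltW eps0) eta0.
rewrite near_withinE; apply: filterS2 lin cont => s lin_s cont_s s0.
set phi := fun r => F (s *: (v + r *: n) + q0).
have phi_sign r : `|r| = eps -> 0 < phi r * (s * (r * c)).
  move=> re; apply: same_sign; apply: le_lt_trans (_ : s * (eps * `|c| / 2) < _).
    have := lin_s r; rewrite F0 subr0 dseg.
    by rewrite (gtr0_norm s0) re => ->.
  rewrite !normrM re gtr0_norm // ltr_pM2l // ltr_pdivrMr //; nra.
have [r rin phir0] : exists2 r, r \in `[- eps, eps] & phi r = 0.
  apply: IVT_sign; first by rewrite ge0_cp // ltW.
    apply: continuous_in_subspaceT => r; rewrite inE /= in_itv /= => /andP[r1 r2].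
    apply: continuous_comp; last first.
      by apply: cont_s; rewrite ler_norml r1 r2.
    apply: continuousD; last exact: cst_continuous.
    apply: continuousZ; first exact: cst_continuous.
    apply: continuousD; first exact: cst_continuous.
    exact: scalel_continuous.
  have := phi_sign eps (gtr0_norm eps0); have := phi_sign (- eps).
  rewrite normrN gtr0_norm // => /(_ erefl) h1 h2.
  have := mulr_gt0 h1 h2.
  rewrite (_ : _ * _ = - (phi (- eps) * phi eps) * (s * (eps * c)) ^+ 2); last by ring.
  by rewrite pmulr_lgt0 ?oppr_gt0 // exprn_even_gt0 // !mulf_neq0 // gt_eqF.
exists r => //; move: rin; rewrite in_itv /= => /andP[r1 r2].
by rewrite ler_norml r1 r2.
Qed.

Lemma zero_set_tangent_seq F q0 v n :
  differentiable F q0 -> F q0 = 0 -> 'd F q0 v = 0 -> 'd F q0 n != 0 ->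
  (\forall q \near q0, {for q, continuous F}) ->
  exists (S : R^nat) (W : E^nat), [/\ forall k, 0 < S k, S @ \oo --> 0,
    W @ \oo --> v & forall k, F (S k *: W k + q0) = 0].
Proof.
move=> dF F0 dFv dFn Fc.
have ex k : exists sr : R * R, [/\ 0 < sr.1, sr.1 <= harmonic k,
    `|sr.2| <= harmonic k & F (sr.1 *: (v + sr.2 *: n) + q0) = 0].
  have [s [s0 sk [r rk Fr]]] : exists s : R, [/\ 0 < s, s <= harmonic k &
      exists2 r, `|r| <= harmonic k & F (s *: (v + r *: n) + q0) = 0].
    apply: (@filter_ex _ (0 : R)^'+); near=> s; split; near: s.
    - exact: nbhs_right_gt.
    - exact: nbhs_right_le (harmonic_gt0 k).
    - exact: zeros_along_direction dF F0 dFv dFn Fc (harmonic_gt0 k).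
  by exists (s, r).
have [SR HSR] := choice ex.
exists (fun k => (SR k).1), (fun k => v + (SR k).2 *: n); split.
- by move=> k; case: (HSR k).
- apply: (@squeeze_cvgr _ _ _ _ (cst 0) harmonic); last exact: cvg_harmonic.
    by near=> k; case: (HSR k) => s0 sh _ _; rewrite ltW.
  exact: cvg_cst.
- rewrite -[X in _ --> X]addr0; apply: cvgD; first exact: cvg_cst.
  rewrite -(scale0r n); apply: cvgZ; last exact: cvg_cst.
  apply: (@squeeze_cvgr _ _ _ _ (- harmonic) harmonic); last exact: cvg_harmonic.
    by near=> k; case: (HSR k) => _ _ r1 _; rewrite -ler_norml.
  by rewrite -oppr0; apply: cvgN; exact: cvg_harmonic.
- by move=> k; case: (HSR k).
Unshelve. all: by end_near. Qed.

Lemma cvg_difference_quotient f x w (S : R^nat) (W : E^nat) :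
  differentiable f x -> (forall k, S k != 0) -> S @ \oo --> 0 -> W @ \oo --> w ->
  (fun k => (f (S k *: W k + x) - f x) / S k) @ \oo --> 'd f x w.
Proof.
move=> df S0 Sto0 Ww.
have dW : (fun k => 'd f x (W k)) @ \oo --> 'd f x w.
  by apply: continuous_cvg => //; exact: diff_continuous.
suff : (fun k => (f (S k *: W k + x) - f x) / S k - 'd f x (W k)) @ \oo --> 0.
  move=> /(cvgD dW); rewrite addr0; apply: cvg_trans; apply: near_eq_cvg.
  by near=> k; rewrite addrC subrK.
apply/cvgr0Pnorm_lt => e e0.
have e1 : 0 < e / (`|w| + 1) by rewrite divr_gt0 // ltr_pwDr.
have SW : (fun k => S k *: W k) @ \oo --> (0 : E).
  by rewrite -(scale0r w); apply: cvgZ.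
have rem := SW _ (differentiable_remainder df e1).
have Wb : \forall k \near \oo, `|W k - w| < 1.
  by move/cvgrPdist_lt : Ww => /(_ 1 ltr01); apply: filterS => k; rewrite distrC.
near=> k.
have h1 : `|f (S k *: W k + x) - f x - 'd f x (S k *: W k)| <=
    e / (`|w| + 1) * `|S k *: W k| by near: k.
have hW : `|W k| < `|w| + 1.
  rewrite -(subrK w (W k)) (le_lt_trans (ler_normD _ _)) // addrC ltrD2l.
  by near: k.
rewrite linearZ /= in h1.
have -> : (f (S k *: W k + x) - f x) / S k - 'd f x (W k) =
    (f (S k *: W k + x) - f x - S k * 'd f x (W k)) / S k.
  by field.
rewrite normrM normfV ltr_pdivrMr ?normr_gt0 //.
apply: (le_lt_trans h1); rewrite normrZ mulrCA [X in _ < X]mulrC ltr_pM2l ?normr_gt0 //.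
by rewrite mulrAC ltr_pdivrMr ?ltr_pwDr // ltr_pM2l.
Unshelve. all: by end_near. Qed.

Lemma quad_perp_tangent_eq0 (F G1 G2 a b c d k1 k2 : E -> R) q0 v :
  differentiable F q0 -> F q0 = 0 -> 'd F q0 v = 0 -> (exists n, 'd F q0 n != 0) ->
  (\forall q \near q0, {for q, continuous F}) ->
  differentiable G1 q0 -> differentiable G2 q0 -> G1 q0 = 0 -> G2 q0 = 0 ->
  {for q0, continuous a} -> {for q0, continuous b} -> {for q0, continuous c} ->
  {for q0, continuous d} -> {for q0, continuous k1} -> {for q0, continuous k2} ->
  (\forall q \near q0, F q = 0 -> G1 q ^+ 2 + G2 q ^+ 2 != 0 ->
     mean_curv_num (a q) (b q) (c q) (d q) (k1 q) (k2 q) (G1 q) (G2 q) = 0) ->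
  quad_perp (a q0) (b q0) (c q0) (d q0) ('d G1 q0 v) ('d G2 q0 v) = 0.
Proof.
move=> dF F0 dFv [n dFn] Fc dG1 dG2 G10 G20 ca cb cc cd ck1 ck2 mc_eq.
have [u0|u0] := eqVneq ('d G1 q0 v ^+ 2 + 'd G2 q0 v ^+ 2) 0.
  have [u10 u20] : 'd G1 q0 v = 0 /\ 'd G2 q0 v = 0.
    by move/eqP: u0; rewrite paddr_eq0 ?sqr_ge0 // !sqrf_eq0 => /andP[/eqP ? /eqP ?].
  by rewrite u10 u20 /quad_perp; ring.
have [S [W [S0 Sto0 Wv FP]]] := zero_set_tangent_seq dF F0 dFv dFn Fc.
have S0' k : S k != 0 by rewrite gt_eqF.
have Pq0 : (fun k => S k *: W k + q0) @ \oo --> q0.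
  rewrite -[X in _ --> X]add0r; apply: cvgD; last exact: cvg_cst.
  by rewrite -(scale0r v); apply: cvgZ.
have quot (G : E -> R) : differentiable G q0 -> G q0 = 0 ->
    (fun k => G (S k *: W k + q0) / S k) @ \oo --> 'd G q0 v.
  move=> dG G0; have := cvg_difference_quotient dG S0' Sto0 Wv.
  by rewrite G0; under eq_fun do rewrite subr0.
apply: (quad_perp_limit (k1 := k1) (k2 := k2) S0' Sto0 Pq0
         (quot _ dG1 G10) (quot _ dG2 G20)) => //.
near=> k; move: (FP k); near: k; exact: Pq0 _ mc_eq.
Unshelve. all: by end_near. Qed.
End FirstOrder.

Section FrameCalculus.
Variable R : realType.
Local Notation V := 'rV[R]_3.
Local Notation "''e_' l" := (delta_mx 0 l : V) (at level 8, l at level 2, format "''e_' l").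

Lemma continuous_sum n (T : topologicalType) (W : normedModType R) (f : 'I_n -> T -> W) p :
  (forall l, {for p, continuous (f l)}) -> {for p, continuous (fun q => \sum_(l < n) f l q)}.
Proof.
move=> fc; rewrite -fct_sumE; elim/big_ind: _ => //; first exact: cst_continuous.
by move=> g h gc hc; exact: continuousD.
Qed.

Lemma near_eq_continuous (T : topologicalType) (W : normedModType R) (f g : T -> W) p :
  (\forall q \near p, f q = g q) -> {for p, continuous f} -> {for p, continuous g}.
Proof.
move=> fg fc; rewrite /prop_for /continuous_at -(nbhs_singleton fg).
by apply: cvg_trans fc; exact: near_eq_cvg.
Qed.

Lemma continuous_rV_coord (T : topologicalType) (f : T -> V) p l :
  {for p, continuous f} -> {for p, continuous (fun q => f q 0 l)}.
Proof. move=> fc; exact: (continuous_comp fc (@coord_continuous R 1 3 0 l (f p))). Qed.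

Lemma differentiable_rV_coord (f : V -> V) p l :
  differentiable f p -> differentiable (fun q => f q 0 l) p.
Proof. move=> df; exact: (differentiable_comp df (differentiable_coord (f p) 0 l)). Qed.

Lemma derive_rV_coord (f : V -> V) p w l : differentiable f p ->
  derive (fun q => f q 0 l) p w = derive f p w 0 l.
Proof. by move=> df; rewrite (derive_mx (diff_derivable df)) mxE. Qed.

Lemma derive_rV_sum (W : normedModType R) (f : V -> W) p w : differentiable f p ->
  derive f p w = \sum_(l < 3) w 0 l *: derive f p 'e_l.
Proof.
move=> df; rewrite deriveE // {1}(row_sum_delta w) linear_sum.
by apply: eq_bigr => l _; rewrite linearZ /= deriveE.
Qed.

Lemma vactE (X : V -> V) (F : V -> R) p : differentiable F p ->
  vact X F p = \sum_(l < 3) X p 0 l * derive F p 'e_l.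
Proof. by move=> dF; rewrite /vact derive_rV_sum. Qed.

Lemma near_open (U : set V) p : open U -> U p -> \forall q \near p, U q.
Proof. by move=> oU Up; exact: open_nbhs_nbhs. Qed.

Section DeriveVact.
Variables (U : set V) (F : V -> R) (X : V -> V).
Hypotheses (oU : open U) (CF : CkOn 2 U F) (CX : CkOn 1 U X).

Let dF p : U p -> differentiable F p := CF.1 p.
Let dFe l p : U p -> differentiable (fun q => derive F q 'e_l) p := (CF.2 'e_l).1 p.
Let dX p : U p -> differentiable X p := CX.1 p.

Lemma vact_nearE p : U p ->
  \forall q \near p, \sum_(l < 3) X q 0 l * derive F q 'e_l = vact X F q.
Proof.
by move=> Up; near=> q; rewrite vactE //; apply: dF; near: q; exact: near_open.
Unshelve. all: by end_near. Qed.

Lemma differentiable_vact p : U p -> differentiable (vact X F) p.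
Proof.
move=> Up; apply: near_eq_differentiable (vact_nearE Up) _.
rewrite (_ : (fun q => _) = \sum_(l < 3) fun q => X q 0 l * derive F q 'e_l).
  apply: differentiable_sum => l.
  by apply: differentiableM; [exact/differentiable_rV_coord/dX|exact: dFe].
by apply/funext => q; rewrite fct_sumE.
Qed.

Lemma derive_vact p w : U p -> derive (vact X F) p w =
  \sum_(l < 3) (X p 0 l * derive (fun q => derive F q 'e_l) p w
                + derive F p 'e_l * derive X p w 0 l).
Proof.
move=> Up.
have dXl l : derivable (fun q => X q 0 l) p w :=
  diff_derivable (differentiable_rV_coord l (dX Up)).
have dFl l : derivable (fun q => derive F q 'e_l) p w := diff_derivable (dFe l Up).
rewrite -(near_eq_derive _ (vact_nearE Up)) -fct_sumE derive_sum; last first.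
  by move=> l; apply: derivableM.
by apply: eq_bigr => l _; rewrite deriveM // derive_rV_coord //; exact: dX.
Qed.

Lemma CkOn1_vact : CkOn 1 U (vact X F).
Proof.
split=> [p|w p Up]; first exact: differentiable_vact.
apply: (near_eq_continuous (f := fun q => \sum_(l < 3)
  (X q 0 l * derive (fun q => derive F q 'e_l) q w + derive F q 'e_l * derive X q w 0 l))).
  by near=> q; rewrite derive_vact //; near: q; exact: near_open.
apply: continuous_sum => l; apply: continuousD; apply: continuousM.
- exact/continuous_rV_coord/differentiable_continuous/dX.
- exact: (CF.2 'e_l).2.
- exact/differentiable_continuous/dFe.
- exact/continuous_rV_coord/(CX.2 w).
Unshelve. all: by end_near. Qed.
End DeriveVact.

Lemma vact_continuous (U : set V) (g : V -> R) (Y : V -> V) p :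
  open U -> U p -> CkOn 1 U g -> {for p, continuous Y} -> {for p, continuous (vact Y g)}.
Proof.
move=> oU Up [dg cg] Yc.
apply: (near_eq_continuous (f := fun q => \sum_(l < 3) Y q 0 l * derive g q 'e_l)).
  by near=> q; rewrite vactE //; apply: dg; near: q; exact: near_open.
apply: continuous_sum => l; apply: continuousM; first exact: continuous_rV_coord.
exact: cg.
Unshelve. all: by end_near. Qed.

Lemma lie_continuous (U : set V) (X Y : V -> V) p :
  open U -> U p -> CkOn 1 U X -> CkOn 1 U Y -> {for p, continuous (lie X Y)}.
Proof.
move=> oU Up [dX cX] [dY cY].
have Xc : {for p, continuous X} by apply: differentiable_continuous; exact: dX.
have Yc : {for p, continuous Y} by apply: differentiable_continuous; exact: dY.
apply: (near_eq_continuous (f := fun q => \sum_(m < 3) X q 0 m *: derive Y q 'e_m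
                                      - \sum_(m < 3) Y q 0 m *: derive X q 'e_m)).
  near=> q; have Uq : U q by near: q; exact: near_open.
  by rewrite /lie -!derive_rV_sum //; [exact: dX q Uq|exact: dY q Uq].
apply: continuousB; apply: continuous_sum => m; apply: continuousZ.
- exact: continuous_rV_coord.
- exact: cY.
- exact: continuous_rV_coord.
- exact: cX.
Unshelve. all: by end_near. Qed.
End FrameCalculus.

Section ContactFrame.
Variable R : realType.
Local Notation V := 'rV[R]_3.
Implicit Types u w z : V.

Lemma pairDl u w z : pair (u + w) z = pair u z + pair w z.
Proof. by rewrite /pair -big_split; apply: eq_bigr => i _; rewrite mxE mulrDl. Qed.

Lemma pairDr u w z : pair z (u + w) = pair z u + pair z w.
Proof. by rewrite /pair -big_split; apply: eq_bigr => i _; rewrite mxE mulrDr. Qed.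

Lemma pairZl (k : R) u z : pair (k *: u) z = k * pair u z.
Proof. by rewrite /pair mulr_sumr; apply: eq_bigr => i _; rewrite mxE mulrA. Qed.

Lemma pairZr (k : R) u z : pair z (k *: u) = k * pair z u.
Proof. by rewrite /pair mulr_sumr; apply: eq_bigr => i _; rewrite mxE mulrCA. Qed.

Lemma pairNr u z : pair z (- u) = - pair z u.
Proof. by rewrite -scaleN1r pairZr mulN1r. Qed.

Lemma pairC u z : pair u z = pair z u.
Proof. by apply: eq_bigr => i _; rewrite mulrC. Qed.

Lemma pair_self_eq0 u : pair u u = 0 -> u = 0.
Proof.
rewrite /pair => /eqP; rewrite psumr_eq0 => [/allP uu|i _]; last first.
  by rewrite -expr2 sqr_ge0.
apply/rowP => i; rewrite mxE; apply/eqP.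
by have /(_ (mem_index_enum _)) := uu i; rewrite mulf_eq0 orbb.
Qed.

Lemma continuous_pair (T : topologicalType) (A B : T -> V) p :
  {for p, continuous A} -> {for p, continuous B} ->
  {for p, continuous (fun q => pair (A q) (B q))}.
Proof.
move=> Ac Bc; apply: continuous_sum => i.
by apply: continuousM; exact: continuous_rV_coord.
Qed.

Definition gram u w := pair u u * pair w w - pair u w * pair w u.

Lemma gram_neq0 u w : (forall a b : R, a *: u + b *: w = 0 -> a = 0 /\ b = 0) ->
  gram u w != 0.
Proof.
move=> indep; apply/eqP => g0.
have [uu0|uu0] := eqVneq (pair u u) 0.
  have [] := indep 1 0; last by move/eqP; rewrite oner_eq0.
  by rewrite (pair_self_eq0 uu0) scaler0 scale0r addr0.
set z := (- pair u w) *: u + pair u u *: w.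
have : pair z z = pair u u * gram u w.
  by rewrite /z /gram !(pairDl, pairDr, pairZl, pairZr) (pairC w u); ring.
rewrite g0 mulr0 => /pair_self_eq0 /indep [_ /eqP].
by rewrite (negbTE uu0).
Qed.

Lemma frame_coef_continuous (T : topologicalType) (A B Y : T -> V) (c1 c2 : T -> R) p :
  {for p, continuous A} -> {for p, continuous B} -> {for p, continuous Y} ->
  (forall a b : R, a *: A p + b *: B p = 0 -> a = 0 /\ b = 0) ->
  (\forall q \near p, Y q = c1 q *: A q + c2 q *: B q) -> {for p, continuous c1}.
Proof.
move=> Ac Bc Yc indep Yeq; set G := fun q => gram (A q) (B q).
have Gc : {for p, continuous G}.
  by apply: continuousB; apply: continuousM; exact: continuous_pair.
have Gp : G p != 0 := gram_neq0 indep.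
have Gnear : \forall q \near p, G q != 0 := cvgr_neq0 _ Gc Gp.
(* Cramer's rule for the Gram system of [Y q] against [A q], [B q] *)
apply: (near_eq_continuous (f := fun q =>
  (pair (Y q) (A q) * pair (B q) (B q) - pair (Y q) (B q) * pair (B q) (A q)) / G q)).
  near=> q; have Gq : G q != 0 by near: q; exact: Gnear.
  rewrite (near Yeq q) // !(pairDl, pairZl); move: Gq; rewrite /G /gram => Gq.
  by field.
apply: continuousM; last exact: continuousV.
by apply: continuousB; apply: continuousM; exact: continuous_pair.
Unshelve. all: by end_near. Qed.

Lemma structure_functions_continuous (U : set V) (X1 X2 X3 om : V -> V)
    (c1 c2 c3 : V -> R) q0 :
  open U -> U q0 -> CkOn 1 U X1 -> CkOn 1 U X2 ->
  {for q0, continuous X3} -> {for q0, continuous om} ->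
  (forall p, U p -> [/\ pair (om p) (X1 p) = 0, pair (om p) (X2 p) = 0
                      & pair (om p) (X3 p) = 1]) ->
  (forall p, U p -> lie X1 X2 p = - (c1 p *: X1 p + c2 p *: X2 p + c3 p *: X3 p)) ->
  (forall a b : R, a *: X1 q0 + b *: X2 q0 = 0 -> a = 0 /\ b = 0) ->
  {for q0, continuous c1} /\ {for q0, continuous c2}.
Proof.
move=> oU Uq0 CX1 CX2 X3c omc Hom Hlie indep.
have X1c : {for q0, continuous X1} := differentiable_continuous (CX1.1 q0 Uq0).
have X2c : {for q0, continuous X2} := differentiable_continuous (CX2.1 q0 Uq0).
(* the [X3]-component of the bracket is read off with the contact form *)
set Y := fun p => pair (om p) (lie X1 X2 p) *: X3 p - lie X1 X2 p.
have Yc : {for q0, continuous Y}.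
  have lc := lie_continuous oU Uq0 CX1 CX2.
  rewrite /Y; apply: continuousB; last exact: lc.
  by apply: continuousZ; [exact: continuous_pair omc lc|exact: X3c].
have Yeq : \forall p \near q0, Y p = c1 p *: X1 p + c2 p *: X2 p.
  near=> p; have Up : U p by near: p; exact: near_open.
  have [om1 om2 om3] := Hom p Up.
  rewrite /Y Hlie // pairNr !pairDr !pairZr om1 om2 om3 !mulr0 mulr1 !add0r.
  by rewrite opprK addrC scaleNr addrK.
split; first exact: frame_coef_continuous X1c X2c Yc indep Yeq.
apply: (frame_coef_continuous (c2 := c1) X2c X1c Yc) => [a b|].
  by rewrite addrC => /indep [].
by near=> p; rewrite addrC; near: p.
Unshelve. all: by end_near. Qed.
End ContactFrame.

Section CharacteristicPoint.
Variable R : realType.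
Local Notation V := 'rV[R]_3.
Variables (U : set V) (X1 X2 : V -> V) (c1 c2 : V -> R) (F : V -> R) (q0 : V).
Hypotheses (oU : open U) (Uq0 : U q0) (CX1 : CkOn 1 U X1) (CX2 : CkOn 1 U X2)
  (CF : CkOn 2 U F) (c1c : {for q0, continuous c1}) (c2c : {for q0, continuous c2}).
Hypothesis Fnondeg : forall p, U p -> F p = 0 -> exists v, derive F p v != 0.
Hypothesis minimal : forall p, U p -> F p = 0 ->
  let D1 := Num.sqrt (vact X1 F p ^+ 2 + vact X2 F p ^+ 2) in
  D1 != 0 ->
  (vact X1 (vact X1 F) p * vact X2 F p ^+ 2
     + vact X2 (vact X2 F) p * vact X1 F p ^+ 2
     - vact X1 F p * vact X2 F p
         * (vact X1 (vact X2 F) p + vact X2 (vact X1 F) p)) / D1 ^+ 3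
  + (c2 p * vact X1 F p - c1 p * vact X2 F p) / D1 = 0.
Hypotheses (Fq0 : F q0 = 0) (X1Fq0 : vact X1 F q0 = 0) (X2Fq0 : vact X2 F q0 = 0).

Local Notation A11 := (vact X1 (vact X1 F) q0).
Local Notation A12 := (vact X2 (vact X1 F) q0).
Local Notation A21 := (vact X1 (vact X2 F) q0).
Local Notation A22 := (vact X2 (vact X2 F) q0).

Lemma quad_perp_frame_eq0 (al be : R) :
  quad_perp A11 A12 A21 A22 (al * A11 + be * A12) (al * A21 + be * A22) = 0.
Proof.
have C1F1 := CkOn1_vact oU CF CX1; have C1F2 := CkOn1_vact oU CF CX2.
have X1c : {for q0, continuous X1} := differentiable_continuous (CX1.1 q0 Uq0).
have X2c : {for q0, continuous X2} := differentiable_continuous (CX2.1 q0 Uq0).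
have dF : differentiable F q0 := CF.1 q0 Uq0.
set v := al *: X1 q0 + be *: X2 q0.
have dv (g : V -> R) : differentiable g q0 ->
    'd g q0 v = al * vact X1 g q0 + be * vact X2 g q0.
  by move=> dg; rewrite linearD !linearZ /= -!deriveE.
have dG1 := C1F1.1 q0 Uq0; have dG2 := C1F2.1 q0 Uq0.
suff : quad_perp A11 A12 A21 A22 ('d (vact X1 F) q0 v) ('d (vact X2 F) q0 v) = 0.
  by move=> H; rewrite -[RHS]H; congr quad_perp; apply/esym/dv.
apply: (quad_perp_tangent_eq0 (F := F) (k1 := c1) (k2 := c2)) => //.
- by rewrite dv // X1Fq0 X2Fq0 !mulr0 addr0.
- by have [n] := Fnondeg Uq0 Fq0; rewrite deriveE //; exists n.
- near=> q; apply: differentiable_continuous; apply: CF.1.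
  by near: q; exact: near_open.
- exact: vact_continuous oU Uq0 C1F1 X1c.
- exact: vact_continuous oU Uq0 C1F1 X2c.
- exact: vact_continuous oU Uq0 C1F2 X1c.
- exact: vact_continuous oU Uq0 C1F2 X2c.
near=> q => Fq nz; apply: mean_curv_num_eq0 => //; apply: minimal => //.
  by near: q; exact: near_open.
by rewrite sqrtr_eq0 -ltNge lt_def nz addr_ge0 ?sqr_ge0.
Unshelve. all: by end_near. Qed.
End CharacteristicPoint.

Theorem mainTheorem9 (R : realType) (U : set 'rV[R]_3)
  (X1 X2 X3 om : 'rV[R]_3 -> 'rV[R]_3) (c1 c2 c3 : 'rV[R]_3 -> R)
  (F : 'rV[R]_3 -> R) (q0 : 'rV[R]_3) :
  open U -> U q0 ->
  (* smooth orthonormal frame X1, X2 of a contact distribution *)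
  SmoothOn U X1 -> SmoothOn U X2 ->
  (forall p, U p -> forall a b c : R,
      a *: X1 p + b *: X2 p + c *: lie X1 X2 p = 0 -> [/\ a = 0, b = 0 & c = 0]) ->
  (* canonical contact form om : om(Delta) = 0, d om (X1, X2) = 1 *)
  SmoothOn U om ->
  (forall p, U p -> [/\ pair (om p) (X1 p) = 0, pair (om p) (X2 p) = 0
                      & dform om p (X1 p) (X2 p) = 1]) ->
  (* Reeb field X3 *)
  SmoothOn U X3 ->
  (forall p, U p -> [/\ pair (om p) (X3 p) = 1, dform om p (X1 p) (X3 p) = 0
                      & dform om p (X2 p) (X3 p) = 0]) ->
  (* structure functions: [X1,X2] = - (c12^1 X1 + c12^2 X2 + c12^3 X3) *)
  (forall p, U p -> lie X1 X2 p = - (c1 p *: X1 p + c2 p *: X2 p + c3 p *: X3 p)) ->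
  (* W = {F = 0} is a C^2 surface *)
  CkOn 2 U F ->
  (forall p, U p -> F p = 0 -> exists v, derive F p v != 0) ->
  (* W is Delta-minimal *)
  (forall p, U p -> F p = 0 ->
     let D1 := Num.sqrt (vact X1 F p ^+ 2 + vact X2 F p ^+ 2) in
     D1 != 0 ->
     (vact X1 (vact X1 F) p * vact X2 F p ^+ 2
        + vact X2 (vact X2 F) p * vact X1 F p ^+ 2
        - vact X1 F p * vact X2 F p
            * (vact X1 (vact X2 F) p + vact X2 (vact X1 F) p)) / D1 ^+ 3
     + (c2 p * vact X1 F p - c1 p * vact X2 F p) / D1 = 0) ->
  (* q0 is a characteristic point of W *)
  F q0 = 0 -> vact X1 F q0 = 0 -> vact X2 F q0 = 0 ->
  (* q0 is isolated among characteristic points of W *)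
  (exists N : set 'rV[R]_3, open N /\ N q0 /\
     forall q, U q -> N q -> F q = 0 -> vact X1 F q = 0 -> vact X2 F q = 0 -> q = q0) ->
  (* the matrix A = [[a, b], [c, d]], A_ij = X_j (X_i F)(q0) *)
  let a := vact X1 (vact X1 F) q0 in
  let b := vact X2 (vact X1 F) q0 in
  let c := vact X1 (vact X2 F) q0 in
  let d := vact X2 (vact X2 F) q0 in
  a * d - b * c != 0 ->
  [/\ a = 0, d = 0, b = - c, a * d - b * c = c ^+ 2 & 0 < a * d - b * c].
Proof.
move=> oU Uq0 sX1 sX2 contact som Hom sX3 Hreeb Hlie CF Fnd Hmin Fq0 X1F X2F _ a b c d det.
have indep (al be : R) : al *: X1 q0 + be *: X2 q0 = 0 -> al = 0 /\ be = 0.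
  by move=> E; have [] := contact q0 Uq0 al be 0; first by rewrite scale0r addr0.
have [c1c c2c] : {for q0, continuous c1} /\ {for q0, continuous c2}.
  apply: (structure_functions_continuous oU Uq0 (sX1 1%N) (sX2 1%N)
            (sX3 0%N q0 Uq0) (som 0%N q0 Uq0) _ Hlie indep).
  by move=> p Up; have [? ? _] := Hom p Up; have [? _ _] := Hreeb p Up.
apply: quad_perp_eq0_det => // x y.
have [al [be [<- <-]]] := cramer2 x y det.
exact (quad_perp_frame_eq0 oU Uq0 (sX1 1%N) (sX2 1%N) CF c1c c2c Fnd Hmin Fq0 X1F X2F al be).
Qed.
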